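(* Let $p$ be a prime, let $r,s$ be positive integers with $r\le s$, and let $m\ge 0$ be the smallest integer with $r\leq p^m$. Then $\lambda(r,s,p)$ is the uniform partition $(s,s,\dots,s)$ (equivalently the deviation vector $\varepsilon(r,s,p)$ equals $(0,\dots,0)$) if and only if $s\equiv 0\pmod{p^m}$.
   Context: For a positive integer $n$, let $J_n$ denote the $n\times n$ matrix with $1$s in positions $(i,i)$ for $1\le i\le n$ and $(i,i+1)$ for $1\le i<n$, and $0$s elsewhere. For $1\le r\le s$ and a field $F$ of characteristic $p$, the Jordan canonical form of $J_r\otimes J_s$ over $F$ is $J_{\lambda_1}\oplus\cdots\oplus J_{\lambda_r}$ with $\lambda_1\ge\cdots\ge\lambda_r>0$; write $\lambda(r,s,p)=(\lambda_1,\dots,\lambda_r)$ (a partition of $rs$ depending only on $r,s,p$). The deviation vector is $\varepsilon(r,s,p)=(\lambda_1-s,\dots,\lambda_r-s)$. *)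

From HB Require Import structures.
From mathcomp Require Import all_boot all_order all_algebra.
Set Implicit Arguments. Unset Strict Implicit. Unset Printing Implicit Defensive.
Import GRing.Theory.
Local Open Scope ring_scope.

(* Entry (i,j) of A for natural-number indices, 0 outside the range. *)
Definition mx_at (R : nzRingType) (m n : nat) (A : 'M[R]_(m, n)) (i j : nat) : R :=
  match @insub nat (fun k => k < m)%N _ i, @insub nat (fun k => k < n)%N _ j with
  | Some i', Some j' => A i' j'
  | _, _ => 0
  end.

Definition kron (R : nzRingType) (m n p q : nat)
  (A : 'M[R]_(m, n)) (B : 'M[R]_(p, q)) : 'M[R]_(m * p, n * q) :=
  \matrix_(i < m * p, j < n * q)
     (mx_at A (i %/ p) (j %/ q) * mx_at B (i %% p) (j %% q)).

Definition jordan1 (R : nzRingType) (n : nat) : 'M[R]_n :=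
  \matrix_(i < n, j < n) (((i : nat) == j) || ((j : nat) == i.+1))%:R.

(* Identify row vectors of length r*s with R[x,y]/(x^r, y^s), the monomial
   x^i y^j being the (i*s + j)-th basis vector.  Then J_r (x) J_s acts as
   multiplication by (1+x)(1+y) and I_r (x) J_s as multiplication by 1+y, so
   N := J_r (x) J_s - 1 and I_r (x) J_s - 1 are multiplication by
   z := (1+x)(1+y) - 1 and by y.  If z^s = 0 in the quotient, the elements
   x^i z^j (i < r, j < s) form a basis, unitriangular with respect to the
   monomials, on which N acts as y acts on the x^i y^j: this gives the
   similarity.  Conversely, similarity forces z^s = 0.  In characteristic p,
   z^(p^k) = (1 + x^(p^k))(1 + y^(p^k)) - 1; writing s = p^a b with p not
   dividing b, z^s = y^s modulo x^(p^a), and the coefficient of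
   x^(p^a) y^(s - p^a) in z^s is b <> 0.  Hence z^s = 0 iff r <= p^a, i.e.
   iff p^m divides s. *)

From HB Require Import structures.
From mathcomp Require Import all_boot all_order all_algebra.
From mathcomp Require Import zify ring.
Set Implicit Arguments. Unset Strict Implicit. Unset Printing Implicit Defensive.
Import GRing.Theory.


Lemma divn_block i j s : (j < s)%N -> ((i * s + j) %/ s)%N = i.
Proof. by move=> hj; rewrite divnMDl ?divn_small ?addn0 // (leq_ltn_trans _ hj). Qed.

Lemma modn_block i j s : (j < s)%N -> ((i * s + j) %% s)%N = j.
Proof. by move=> hj; rewrite modnMDl modn_small. Qed.

Lemma block_lt i j r s : (i < r)%N -> (j < s)%N -> (i * s + j < r * s)%N.
Proof.
move=> hi hj; apply: (@leq_trans (i.+1 * s)); first by rewrite mulSnr ltn_add2l.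
by rewrite leq_mul2r hi orbT.
Qed.

Lemma divn_block_lt l r s : (l < r * s)%N -> (l %/ s < r)%N.
Proof. by case: s => [|s]; rewrite ?muln0 // ltn_divLR. Qed.

Lemma modn_block_lt l r s : (l < r * s)%N -> (l %% s < s)%N.
Proof. by case: s => [|s]; rewrite ?muln0 // ltn_mod. Qed.

Lemma eqn_block k l s : (k == l) = (k %/ s == l %/ s) && (k %% s == l %% s).
Proof.
apply/eqP/andP => [-> //|[/eqP e1 /eqP e2]].
by rewrite (divn_eq k s) (divn_eq l s) e1 e2.
Qed.

Local Open Scope ring_scope.

Lemma big_nat_mul (V : nmodType) r s (h : nat -> V) :
  \sum_(0 <= k < r * s) h k = \sum_(0 <= i < r) \sum_(0 <= j < s) h (i * s + j)%N.
Proof.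
elim: r => [|r IH]; first by rewrite mul0n !big_geq.
rewrite mulSnr (@big_cat_nat _ _ _ (r * s)) ?leq_addr //= IH big_nat_recr //=.
congr (_ + _); rewrite -{1}[(r * s)%N]add0n big_addn addKn.
by apply: eq_bigr => j _; rewrite addnC.
Qed.

Lemma sum_nat_delta (R : nzSemiRingType) n k (g : nat -> R) :
  \sum_(0 <= j < n) (j == k)%:R * g j = if (k < n)%N then g k else 0.
Proof.
rewrite (eq_bigr (fun j => if j == k then g j else 0)); last first.
  by move=> j _; case: eqP; rewrite ?mul1r ?mul0r.
by rewrite -big_mkcond big_nat1_eq.
Qed.

Section MxAt.
Variable R : nzRingType.

Lemma mx_atE m n (A : 'M[R]_(m, n)) (i : 'I_m) (j : 'I_n) : mx_at A i j = A i j.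
Proof. by rewrite /mx_at !valK. Qed.

Lemma mx_at_in m n (A : 'M[R]_(m, n)) i j (hi : (i < m)%N) (hj : (j < n)%N) :
  mx_at A i j = A (Ordinal hi) (Ordinal hj).
Proof. exact: (mx_atE A (Ordinal hi) (Ordinal hj)). Qed.

Lemma mx_at_outl m n (A : 'M[R]_(m, n)) i j : (m <= i)%N -> mx_at A i j = 0.
Proof. by move=> h; rewrite /mx_at insubF // ltnNge h. Qed.

Lemma mx_at_outr m n (A : 'M[R]_(m, n)) i j : (n <= j)%N -> mx_at A i j = 0.
Proof. by move=> h; rewrite /mx_at; case: insub => // ?; rewrite insubF // ltnNge h. Qed.

Lemma mx_at_tr m n (A : 'M[R]_(m, n)) i j : mx_at A^T i j = mx_at A j i.
Proof.
case: (ltnP i n) => hi; last by rewrite mx_at_outl // mx_at_outr.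
case: (ltnP j m) => hj; last by rewrite mx_at_outr // mx_at_outl.
by rewrite (mx_at_in _ hi hj) (mx_at_in _ hj hi) mxE.
Qed.

Lemma mx_at_mul m n k (A : 'M[R]_(m, n)) (B : 'M[R]_(n, k)) i j :
  mx_at (A *m B) i j = \sum_(0 <= t < n) mx_at A i t * mx_at B t j.
Proof.
case: (ltnP i m) => hi; last first.
  by rewrite mx_at_outl // big1 // => t _; rewrite mx_at_outl ?mul0r.
case: (ltnP j k) => hj; last first.
  by rewrite mx_at_outr // big1 // => t _; rewrite (mx_at_outr B) ?mulr0.
rewrite (mx_at_in _ hi hj) mxE big_mkord; apply: eq_bigr => t _.
by rewrite -(mx_atE A) -(mx_atE B).
Qed.

Lemma mx_at_jordan1 n i j :
  mx_at (jordan1 R n) i j = (((i == j) || (j == i.+1)) && (j < n)%N)%:R.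
Proof.
case: (ltnP j n) => hj; last by rewrite mx_at_outr // andbF.
case: (ltnP i n) => hi; last first.
  by rewrite mx_at_outl // andbT; have -> : (i == j) || (j == i.+1) = false by lia.
by rewrite (mx_at_in _ hi hj) mxE andbT.
Qed.

End MxAt.

Section BinomialRemainder.
Variable R : comNzRingType.

Lemma exprD_modl (a b : R) n : exists h, (a + b) ^+ n = b ^+ n + a * h.
Proof.
elim: n => [|n [h IHn]]; first by exists 0; rewrite !expr0 mulr0 addr0.
by exists (b ^+ n + h * (a + b)); rewrite exprSr IHn exprSr; ring.
Qed.

Lemma exprD_modl_sqr (a b : R) n :
  exists h, (a + b) ^+ n = b ^+ n + n%:R * a * b ^+ n.-1 + a ^+ 2 * h.
Proof.
elim: n => [|n [h IHn]]; first by exists 0; rewrite !expr0 mulr0 mul0r mul0r !addr0.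
exists (n%:R * b ^+ n.-1 + h * (a + b)); rewrite exprSr IHn.
case: n IHn => [|n] _ /=; first by rewrite !expr0; ring.
by rewrite !exprS -[n.+2]addn1 natrD; ring.
Qed.

End BinomialRemainder.

Section MatrixProducts.
Variable R : comNzRingType.

Lemma mx_at_mulmx_jordan1 m n (C : 'M[R]_(m, n)) i j : (j < n)%N ->
  mx_at (C *m jordan1 R n) i j = mx_at C i j + (if j == 0%N then 0 else mx_at C i j.-1).
Proof.
move=> hj; rewrite mx_at_mul.
under eq_bigr => t _ do rewrite mx_at_jordan1 hj andbT mulrC.
case: j hj => [|j] hj /=.
  under eq_bigr => t _ do rewrite orbF.
  by rewrite sum_nat_delta hj addr0.
rewrite (eq_bigr (fun t => (t == j.+1)%:R * mx_at C i t + (t == j)%:R * mx_at C i t)).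
  by rewrite big_split /= !sum_nat_delta hj ltnW.
move=> t _; rewrite eqSS [j == t]eq_sym.
case: (eqVneq t j) => [->|_]; rewrite ?orbF ?orbT ?mul0r ?addr0 //.
by rewrite (ltn_eqF (ltnSn j)) mul0r add0r.
Qed.

Lemma mx_at_kron m n p q (A : 'M[R]_(m, n)) (B : 'M[R]_(p, q)) k l :
  (k < m * p)%N -> (l < n * q)%N ->
  mx_at (kron A B) k l = mx_at A (k %/ p) (l %/ q) * mx_at B (k %% p) (l %% q).
Proof. by move=> hk hl; rewrite (mx_at_in _ hk hl) mxE. Qed.

(* Row-major vectorisation; unlike [mxvec], its indexing is explicit. *)
Definition mxrow m n (C : 'M[R]_(m, n)) : 'rV[R]_(m * n) :=
  \row_(l < m * n) mx_at C (l %/ n) (l %% n).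

Lemma mx_at_mxrow m n (C : 'M[R]_(m, n)) i j : (i < m)%N -> (j < n)%N ->
  mx_at (mxrow C) 0 (i * n + j) = mx_at C i j.
Proof.
move=> hi hj; rewrite (mx_at_in _ (ltn0Sn 0) (block_lt hi hj)) mxE /=.
by rewrite divn_block ?modn_block.
Qed.

Lemma mxrow_kron m n m' n' (C : 'M[R]_(m, n)) (A : 'M[R]_(m, m')) (B : 'M[R]_(n, n')) :
  mxrow C *m kron A B = mxrow (A^T *m C *m B).
Proof.
apply/rowP => l; rewrite -mx_atE mx_at_mul big_nat_mul mxE !mx_at_mul.
rewrite exchange_big /=; apply: eq_big_nat => j /andP[_ hj].
rewrite mx_at_mul mulr_suml; apply: eq_big_nat => i /andP[_ hi].
rewrite mx_at_mxrow // mx_at_kron ?block_lt // divn_block // modn_block //.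
by rewrite mx_at_tr; ring.
Qed.

End MatrixProducts.

Section TruncatedPolynomials.
Variables (R : comNzRingType) (r s : nat).
Local Notation x := ('X : {poly {poly R}}).

Definition coefmx (f : {poly {poly R}}) : 'M[R]_(r, s) := \matrix_(i, j) f`_i`_j.

Definition trunc_rV f := mxrow (coefmx f).

Lemma mx_at_coefmx f i j : (i < r)%N -> (j < s)%N -> mx_at (coefmx f) i j = f`_i`_j.
Proof. by move=> hi hj; rewrite (mx_at_in _ hi hj) mxE. Qed.

Lemma trunc_rVE f (l : 'I_(r * s)) : trunc_rV f 0 l = f`_(l %/ s)`_(l %% s).
Proof.
by rewrite mxE mx_at_coefmx ?(divn_block_lt (ltn_ord l)) ?(modn_block_lt (ltn_ord l)).
Qed.

Lemma trunc_rV_coef0 f i j : trunc_rV f = 0 -> (i < r)%N -> (j < s)%N -> f`_i`_j = 0.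
Proof.
move=> f0 hi hj.
have := congr1 (fun v : 'rV[R]_(r * s) => v 0 (Ordinal (block_lt hi hj))) f0.
by rewrite trunc_rVE mxE /= divn_block ?modn_block.
Qed.

Lemma trunc_rVD f g : trunc_rV (f + g) = trunc_rV f + trunc_rV g.
Proof. by apply/rowP => l; rewrite [RHS]mxE !trunc_rVE coefD coefD. Qed.

Lemma trunc_rVB f g : trunc_rV (f - g) = trunc_rV f - trunc_rV g.
Proof.
by apply/rowP => l; rewrite [RHS]mxE [X in _ = _ + X]mxE !trunc_rVE coefB coefB.
Qed.

Lemma coefmx_mul1y f : coefmx (f * (1 + 'Y)) = coefmx f *m jordan1 R s.
Proof.
apply/matrixP => i j; rewrite -(mx_atE (_ *m _)) mx_at_mulmx_jordan1 // mxE.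
rewrite mulrDr mulr1 coefD coefMC coefD coefMX (mx_at_coefmx f) //.
by case: (j : nat) (ltn_ord j) => //= j' hj; rewrite mx_at_coefmx // ltnW.
Qed.

Lemma coefmx_mul1x f : coefmx (f * (1 + x)) = (jordan1 R r)^T *m coefmx f.
Proof.
apply: trmx_inj; apply/matrixP => j i; rewrite trmx_mul trmxK.
rewrite -(mx_atE (_ *m _)) mx_at_mulmx_jordan1 // !mx_at_tr !mxE.
rewrite mulrDr mulr1 coefD coefMX coefD.
case: (i : nat) (ltn_ord i) => [i0|i' hi] /=.
  by rewrite coef0 !addr0 (mx_at_coefmx f).
by rewrite !(mx_at_coefmx f) // ltnW.
Qed.

Lemma trunc_rV_mul1x1y f :
  trunc_rV (f * ((1 + x) * (1 + 'Y))) = trunc_rV f *m kron (jordan1 R r) (jordan1 R s).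
Proof. by rewrite /trunc_rV mxrow_kron mulrA coefmx_mul1y coefmx_mul1x. Qed.

Lemma trunc_rV_mul1y f : trunc_rV (f * (1 + 'Y)) = trunc_rV f *m kron 1%:M (jordan1 R s).
Proof. by rewrite /trunc_rV mxrow_kron trmx1 mul1mx coefmx_mul1y. Qed.

Section MultiplicationOperator.
Variables (g : {poly {poly R}}) (M : 'M[R]_(r * s)).
Hypothesis trunc_rV_mulg : forall f, trunc_rV (f * g) = trunc_rV f *m M.

Lemma trunc_rV_mul_subr1 f : trunc_rV (f * (g - 1)) = trunc_rV f *m (M - 1).
Proof. by rewrite mulrBr mulr1 trunc_rVB trunc_rV_mulg mulmxBr mulmx1. Qed.

Lemma trunc_rV_mul_exp f n : trunc_rV (f * g ^+ n) = trunc_rV f *m M ^+ n.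
Proof.
elim: n f => [|n IHn] f; first by rewrite !expr0 mulr1 mulmx1.
by rewrite exprSr mulrA trunc_rV_mulg IHn -mulmxA mulmxE -exprSr.
Qed.

End MultiplicationOperator.

Lemma coef_monomial i j a b : (x ^+ i * 'Y ^+ j)`_a`_b = ((a == i) && (b == j))%:R.
Proof.
rewrite -(rmorphXn polyC) coefMC coefXn.
by case: (a == i); rewrite ?mul1r ?mul0r ?coefXn ?coef0.
Qed.

Lemma trunc_rV_monomial i j (hi : (i < r)%N) (hj : (j < s)%N) :
  trunc_rV (x ^+ i * 'Y ^+ j) = delta_mx 0 (Ordinal (block_lt hi hj)).
Proof.
apply/rowP => l; rewrite trunc_rVE coef_monomial !mxE /= -val_eqE /=.
by rewrite (eqn_block l _ s) divn_block ?modn_block.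
Qed.

Lemma trunc_rV_monomial_ord (k : 'I_(r * s)) :
  trunc_rV (x ^+ (k %/ s) * 'Y ^+ (k %% s)) = delta_mx 0 k.
Proof.
rewrite (trunc_rV_monomial (divn_block_lt (ltn_ord k)) (modn_block_lt (ltn_ord k))).
by congr delta_mx; apply: val_inj; rewrite /= -divn_eq.
Qed.

Lemma trunc_rV_XnM_eq0 n f : (r <= n)%N -> trunc_rV (x ^+ n * f) = 0.
Proof.
move=> hn; apply/rowP => l; rewrite trunc_rVE mxE coefXnM.
by rewrite (leq_trans (divn_block_lt (ltn_ord l)) hn) coef0.
Qed.

Lemma trunc_rV_YnM_eq0 n f : (s <= n)%N -> trunc_rV ('Y ^+ n * f) = 0.
Proof.
move=> hn; apply/rowP => l; rewrite trunc_rVE mxE -(rmorphXn polyC) coefCM coefXnM.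
by rewrite (leq_trans (modn_block_lt (ltn_ord l)) hn).
Qed.

Lemma trunc_rV_monomials_eq0 n (M : 'M[R]_(r * s, n)) :
  (forall i j, (i < r)%N -> (j < s)%N -> trunc_rV (x ^+ i * 'Y ^+ j) *m M = 0) -> M = 0.
Proof.
move=> hM; apply/row_matrixP => k; rewrite row0 rowE -trunc_rV_monomial_ord.
by apply: hM; [apply: divn_block_lt | apply: modn_block_lt].
Qed.

Local Notation z := ((1 + x) * (1 + 'Y) - 1).
Local Notation kJJ := (kron (jordan1 R r) (jordan1 R s)).
Local Notation kIJ := (kron (1%:M : 'M[R]_r) (jordan1 R s)).

Lemma trunc_rV_mulzn f n : trunc_rV (f * z ^+ n) = trunc_rV f *m (kJJ - 1) ^+ n.
Proof. exact/trunc_rV_mul_exp/trunc_rV_mul_subr1/trunc_rV_mul1x1y. Qed.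

Lemma trunc_rV_mulYn f n : trunc_rV (f * 'Y ^+ n) = trunc_rV f *m (kIJ - 1) ^+ n.
Proof.
rewrite -{1}['Y](addrK 1) [_ + 1]addrC.
exact/trunc_rV_mul_exp/trunc_rV_mul_subr1/trunc_rV_mul1y.
Qed.

Lemma kron1_jordan1_nilpotent : (kIJ - 1) ^+ s = 0.
Proof.
apply: trunc_rV_monomials_eq0 => i j _ _.
by rewrite -trunc_rV_mulYn -mulrA -exprD mulrC trunc_rV_YnM_eq0 // leq_addl.
Qed.

Lemma z_frobenius p k : p \in [pchar R] ->
  z ^+ (p ^ k)%N = (1 + x ^+ (p ^ k)%N) * (1 + 'Y ^+ (p ^ k)%N) - 1.
Proof.
move=> pR; have pP : p \in [pchar {poly {poly R}}] by rewrite !pchar_poly.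
have hq : [pchar {poly {poly R}}].-nat (p ^ k)%N.
  by rewrite (eq_pnat _ (pcharf_eq pP)) pnatX pnat_id // (pcharf_prime pP).
by rewrite exprDn_pchar // exprNn_pchar // expr1n exprMn !exprDn_pchar // !expr1n.
Qed.

Lemma kron_jordan1_nilpotent p m : p \in [pchar R] ->
  (r <= p ^ m)%N -> (p ^ m %| s)%N -> (kJJ - 1) ^+ s = 0.
Proof.
move=> pR hr /dvdnP[b es]; set q := (p ^ m)%N in hr es.
have [h eh] := exprD_modl (x ^+ q * (1 + 'Y ^+ q)) ('Y ^+ q) b.
have zq : z ^+ q = x ^+ q * (1 + 'Y ^+ q) + 'Y ^+ q by rewrite z_frobenius //; ring.
have zs : z ^+ s = 'Y ^+ s + x ^+ q * ((1 + 'Y ^+ q) * h).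
  by rewrite es mulnC !exprM zq eh mulrA.
apply: trunc_rV_monomials_eq0 => i j _ _.
rewrite -trunc_rV_mulzn zs mulrDr trunc_rVD -mulrA -exprD mulrC.
rewrite trunc_rV_YnM_eq0 ?leq_addl //.
by rewrite add0r mulrACA -exprD trunc_rV_XnM_eq0 // (leq_trans hr (leq_addl _ _)).
Qed.

Lemma coef_z_exp p k b : p \in [pchar R] -> (0 < b)%N ->
  (z ^+ (p ^ k * b))`_(p ^ k)`_(p ^ k * b - p ^ k) = b%:R.
Proof.
move=> pR; set q := (p ^ k)%N; case: b => [//|c] _.
have q0 : (0 < q)%N by rewrite expn_gt0 prime_gt0 // (pcharf_prime pR).
have [h eh] := exprD_modl_sqr (x ^+ q * (1 + 'Y ^+ q)) ('Y ^+ q) c.+1.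
have zq : z ^+ q = x ^+ q * (1 + 'Y ^+ q) + 'Y ^+ q by rewrite z_frobenius //; ring.
have E : z ^+ (q * c.+1) = x ^+ 0 * 'Y ^+ (q * c.+1)
    + (x ^+ q * 'Y ^+ (q * c) + x ^+ q * 'Y ^+ (q * c.+1)) *+ c.+1
    + x ^+ (q + q) * ((1 + 'Y ^+ q) ^+ 2 * h).
  by rewrite exprM zq eh !exprM exprD !exprS /=; ring.
have e1 : (q * c.+1 - q = q * c)%N by rewrite mulnS addKn.
have e2 : (q * c == q * c.+1)%N = false by rewrite mulnS; lia.
have e3 : (q < q + q)%N by lia.
rewrite E !(coefD, coefMn) !coef_monomial coefXnM e3 coef0 addr0 e1 e2 eqxx.
by rewrite andbF eqxx /= add0r addr0.
Qed.

Lemma kron_jordan1_nilpotent_pfactor p : p \in [pchar R] -> (0 < s)%N ->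
  (kJJ - 1) ^+ s = 0 -> (r <= p ^ logn p s)%N.
Proof.
move=> pR s0 Nnil; have pp := pcharf_prime pR.
set q := (p ^ logn p s)%N; set b := (s %/ q)%N.
have sqb : s = (q * b)%N by rewrite mulnC divnK // pfactor_dvdnn.
have b0 : (0 < b)%N by move: s0; rewrite sqb muln_gt0 => /andP[].
have pb : ~~ (p %| b)%N.
  apply/negP => /dvdnP[c bc].
  have : (p ^ (logn p s).+1 %| s)%N by rewrite {2}sqb bc /q expnSr mulnCA dvdn_mull.
  by rewrite pfactor_dvdn // ltnn.
rewrite leqNgt; apply/negP => qr.
have sq : (s - q < s)%N by rewrite ltn_subrL expn_gt0 prime_gt0.
have zs0 : trunc_rV (z ^+ s) = 0 by rewrite -[z ^+ s]mul1r trunc_rV_mulzn Nnil mulmx0.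
have := coef_z_exp (logn p s) pR b0.
rewrite -/q -sqb (trunc_rV_coef0 zs0 qr sq).
by move/esym/eqP; rewrite -(dvdn_pcharf pR) (negbTE pb).
Qed.

Definition basis_change_mx : 'M[R]_(r * s) :=
  \matrix_(k < r * s) trunc_rV (x ^+ (k %/ s) * z ^+ (k %% s)).

Lemma basis_change_mx_intertwines :
  (kJJ - 1) ^+ s = 0 -> basis_change_mx *m kJJ = kIJ *m basis_change_mx.
Proof.
move=> Nnil; rewrite -[kJJ](subrK 1) -[kIJ](subrK 1) mulmxDr mulmxDl mulmx1 mul1mx.
congr (_ + _); apply/row_matrixP => k; rewrite !row_mul rowK rowE.
rewrite -[kJJ - 1]expr1 -[kIJ - 1]expr1 -trunc_rV_monomial_ord.
rewrite -trunc_rV_mulzn -trunc_rV_mulYn -!mulrA -!exprSr.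
have hk := divn_block_lt (ltn_ord k); have := modn_block_lt (ltn_ord k).
rewrite leq_eqVlt => /orP[/eqP ks|hs].
  rewrite ks trunc_rV_mulzn Nnil mulmx0.
  by rewrite mulrC trunc_rV_YnM_eq0 ?mul0mx.
by rewrite (trunc_rV_monomial hk hs) -rowE rowK /= divn_block ?modn_block.
Qed.

Lemma basis_change_mx_uppertri (k l : 'I_(r * s)) :
  (l <= k)%N -> basis_change_mx k l = (k == l)%:R.
Proof.
move=> lk; rewrite mxE trunc_rVE.
have [h eh] := exprD_modl (x * (1 + 'Y)) 'Y (k %% s).
have -> : z = x * (1 + 'Y) + 'Y by ring.
rewrite eh mulrDr.
have -> : x ^+ (k %/ s) * (x * (1 + 'Y) * h) = x ^+ (k %/ s).+1 * ((1 + 'Y) * h).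
  by rewrite exprSr; ring.
rewrite coefD coefD coef_monomial coefXnM ltnS leq_div2r // coef0 addr0.
by rewrite -val_eqE /= (eqn_block k _ s) eq_sym [(_ %% s == _)%N]eq_sym.
Qed.

Lemma det_basis_change_mx : \det basis_change_mx = 1.
Proof.
rewrite -det_tr det_trig; last first.
  apply/is_trig_mxP => i j ij; rewrite mxE basis_change_mx_uppertri ?(ltnW ij) //.
  by rewrite -val_eqE /= gtn_eqF.
by rewrite big1 // => i _; rewrite mxE basis_change_mx_uppertri // eqxx.
Qed.

End TruncatedPolynomials.

Lemma intertwine_subr1_exp (R : pzRingType) n (P A B : 'M[R]_n) k :
  P *m A = B *m P -> P *m (A - 1) ^+ k = (B - 1) ^+ k *m P.
Proof.
move=> PAB; have PAB1 : P *m (A - 1) = (B - 1) *m P.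
  by rewrite mulmxBr mulmxBl PAB mulmx1 mul1mx.
elim: k => [|k IHk]; first by rewrite !expr0 mulmx1 mul1mx.
by rewrite !exprSr -!mulmxE mulmxA IHk -mulmxA PAB1 mulmxA.
Qed.

Theorem proposition3 (F : fieldType) (p r s m : nat) :
  prime p -> p \in [pchar F] ->
  (0 < r)%N -> (r <= s)%N ->
  (r <= p ^ m)%N -> (forall k : nat, (r <= p ^ k)%N -> (m <= k)%N) ->
  (similar_in unitmx (kron (jordan1 F r) (jordan1 F s))
                     (kron (1%:M : 'M[F]_r) (jordan1 F s))
   <-> (p ^ m %| s)%N).
Proof.
move=> _ pF r0 rs hr hmin; split => [[P Pu /(similarP Pu) PAB]|dvd_s].
  have Nnil : (kron (jordan1 F r) (jordan1 F s) - 1) ^+ s = 0.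
    rewrite -[LHS]mul1mx -(mulVmx Pu) -mulmxA (intertwine_subr1_exp _ PAB).
    by rewrite kron1_jordan1_nilpotent mul0mx mulmx0.
  have /hmin ms := kron_jordan1_nilpotent_pfactor pF (leq_trans r0 rs) Nnil.
  exact: dvdn_trans (dvdn_exp2l p ms) (pfactor_dvdnn p s).
have Pu : basis_change_mx F r s \in unitmx by rewrite unitmxE det_basis_change_mx unitr1.
exists (basis_change_mx F r s) => //; apply/(similarP Pu).
exact/basis_change_mx_intertwines/(kron_jordan1_nilpotent pF hr dvd_s).
Qed.
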